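(* Let $p>2$, and let $F$, $a$, $K$, $G=\langle\sigma\rangle$, $J$, $J_i$, $N$, $M_\gamma$ be as in the context. Let $\gamma\in K^\times$ with $[\gamma]\neq[1]$, and let $l=\dim_{\mathbb{F}_p}M_\gamma$ (so $[\gamma]\in J_l\setminus J_{l-1}$). (a) If $3\le l\le p$, then there exists $[\alpha]\in J$ such that $\langle N([\alpha])\rangle = M_\gamma^G$. (b) If $l=2$ and $\gamma$ cannot be written as $\gamma=(\sqrt[p]{a})^{r}\gamma_1$ with $r\in\mathbb{Z}$ and $[\gamma_1]\in J_1$, then there exist $t\in\mathbb{Z}$ and $[\alpha]\in J$ such that $\langle N([\alpha])\rangle = \big(M_{(\sqrt[p]{a})^{t}\gamma}\big)^G$.
   Context: Let $p$ be a prime and $F$ a field of characteristic different from $p$ containing a primitive $p$th root of unity $\xi_p$. Let $a\in F^\times\setminus F^{\times p}$, fix a $p$th root $\sqrt[p]{a}$, and let $K=F(\sqrt[p]{a})$; $K^\times=K\setminus\{0\}$. Let $G=\mathrm{Gal}(K/F)=\langle\sigma\rangle$, where $\sigma(\sqrt[p]{a})/\sqrt[p]{a}=\xi_p$. Let $J=K^\times/K^{\times p}$, an $\mathbb{F}_p[G]$-module with elements $[\gamma]$, $\gamma\in K^\times$. Let $N=1+\sigma+\dots+\sigma^{p-1}$, acting on $J$. For $i\ge1$ let $J_i=\ker\big((\sigma-1)^i\colon J\to J\big)$, and $J_0=\{0\}$. For $\gamma\in K^\times$ with $[\gamma]\in J_i\setminus J_{i-1}$, let $\gamma_j=\gamma^{(\sigma-1)^j}$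 and $M_\gamma=\langle[\gamma],[\gamma_1],\dots,[\gamma_{i-1}]\rangle$, the cyclic $\mathbb{F}_p[G]$-submodule of $J$ generated by $[\gamma]$; it has $\mathbb{F}_p$-dimension $i$. $\langle\cdot\rangle$ denotes $\mathbb{F}_p$-span and $V^G$ the $G$-fixed submodule. *)

From HB Require Import structures.
From mathcomp Require Import all_boot all_order all_algebra all_fingroup all_field.
Set Implicit Arguments. Unset Strict Implicit. Unset Printing Implicit Defensive.
Import GRing.Theory.
Local Open Scope ring_scope.

(* J = K^x / K^{x p}: we work with representatives gamma in K^x (gamma != 0);
   [x] = [y] in J  iff  x = y * z^p for some nonzero z. *)
Section KummerDefs.
Variables (K : fieldType) (p : nat) (sigma : K -> K).

Definition same_cls (x y : K) : Prop := exists2 z : K, z != 0 & x = y * z ^+ p.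

Definition triv_cls (x : K) : Prop := same_cls x 1.

(* action of sigma - 1 on representatives: [x] |-> [sigma x / x] *)
Definition sm1 (x : K) : K := sigma x / x.

Definition gam (j : nat) (x : K) : K := iter j sm1 x.

Definition inJ (i : nat) (x : K) : Prop := triv_cls (gam i x).

(* [x] \in M_gamma, the cyclic F_p[G]-submodule generated by [gamma], i.e. the
   F_p-span of the [gamma_j], j >= 0 *)
Definition inM (gamma x : K) : Prop :=
  exists (n : nat) (c : nat -> nat),
    same_cls x (\prod_(j < n) gam j gamma ^+ c j).

Definition fixedJ (x : K) : Prop := triv_cls (sm1 x).

Definition normJ (alpha : K) : K := \prod_(k < p) iter k sigma alpha.

Definition inSpan (y x : K) : Prop := exists k : nat, same_cls x (y ^+ k).

Definition span_norm_eq_fixedM (alpha gamma : K) : Prop :=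
  forall x : K, x != 0 -> (inSpan (normJ alpha) x <-> (inM gamma x /\ fixedJ x)).

End KummerDefs.

(* If [gamma] has exact level [l], a G-fixed word prod_j [gamma_j]^(c_j) in M_gamma has
   p | c_j for every j < l - 1 (apply (sigma - 1)^(l-1-j) to it), so M_gamma^G is the line
   spanned by [gamma_(l-1)], and it suffices to show that [gamma_(l-1)] (up to the twist in
   (b)) is a norm class.  Put u = gamma_(l-2); then x = u^(sigma-1) satisfies
   sigma x = x z^p, and N x = 1 forces N z = 1, so Hilbert 90 (proved with Lagrange
   resolvents of the powers of the Kummer generator) writes z = c^(sigma-1) and hence
   u^(sigma-1) = f c^p with f in F.  For odd p the element P = u f^((p-1)/2) prod_k c_k,
   with c_k the partial norms of c, is a p-th root of N u on which sigma acts by the p-th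
   root of unity f N(c).  When l >= 3, u is itself a (sigma-1)-image, so N u = 1, P is
   fixed, f = N(c)^-1 and u^(sigma-1) = N(c^-1) c^p.  When l = 2, f N(c) = xi^j and
   replacing gamma by (sqrt[p]{a})^(p-j) gamma absorbs the root of unity. *)

From Pilot Require Import Defs.
From HB Require Import structures.
From mathcomp Require Import all_boot all_order all_algebra all_fingroup all_field.
From mathcomp Require Import ring.
Set Implicit Arguments. Unset Strict Implicit. Unset Printing Implicit Defensive.
Import GRing.Theory.
Local Open Scope ring_scope.
(* fingroup also exports a lemma named [normJ]. *)
Local Notation normJ := Pilot.Defs.normJ.

Lemma sum_ord_odd n : odd n -> (\sum_(k < n) k = n * n.-1./2)%N.
Proof.
case: n => // n /= ev.
by rewrite -(big_mkord xpredT id) bin2_sum bin2 /= -{2}(odd_double_half n) (negbTE ev)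
  add0n -doubleMr doubleK.
Qed.

Lemma sum_expr_prim_root (R : idomainType) n (z : R) i :
  n.-primitive_root z -> (i < n)%N ->
  \sum_(m < n) (z ^+ i) ^+ m = if i == 0%N then n%:R else 0.
Proof.
move=> z_prim lt_i_n; case: eqP => [->|i_neq0].
  by rewrite (eq_bigr (fun _ => 1)) ?sumr_const ?card_ord // => m _; rewrite expr0 expr1n.
have /eqP : (z ^+ i) ^+ n - 1 = 0.
  by rewrite exprAC (prim_expr_order z_prim) expr1n subrr.
rewrite subrX1 mulf_eq0 subr_eq0 => /orP[/eqP zi1|/eqP //].
have := eq_prim_root_expr z_prim i 0; rewrite zi1 expr0 eqxx.
by rewrite modn_small // mod0n => /esym/eqP.
Qed.

Section PthPowerClasses.
Variables (K : fieldType) (p : nat).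

Lemma triv_clsP (x : K) : triv_cls p x <-> exists2 z : K, z != 0 & x = z ^+ p.
Proof. by split=> -[z nz ->]; exists z; rewrite ?mul1r. Qed.

Lemma triv_cls_expp (z : K) : z != 0 -> triv_cls p (z ^+ p).
Proof. by move=> nz; apply/triv_clsP; exists z. Qed.

Lemma triv_cls1 : triv_cls p (1 : K).
Proof. by rewrite -(expr1n _ p); apply/triv_cls_expp/oner_neq0. Qed.

Lemma triv_clsM (x y : K) : triv_cls p x -> triv_cls p y -> triv_cls p (x * y).
Proof.
move=> /triv_clsP[z nz ->] /triv_clsP[w nw ->].
by rewrite -exprMn; apply/triv_cls_expp; rewrite mulf_neq0.
Qed.

Lemma triv_clsV (x : K) : triv_cls p x -> triv_cls p x^-1.
Proof.
by move=> /triv_clsP[z nz ->]; rewrite -exprVn; apply/triv_cls_expp; rewrite invr_eq0.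
Qed.

Lemma triv_clsX (x : K) n : triv_cls p x -> triv_cls p (x ^+ n).
Proof.
move=> tx; elim: n => [|n IHn]; first by rewrite expr0; apply: triv_cls1.
by rewrite exprS; apply: triv_clsM.
Qed.

Lemma triv_cls_prod (I : Type) (r : seq I) (P : pred I) (f : I -> K) :
  (forall i, P i -> triv_cls p (f i)) -> triv_cls p (\prod_(i <- r | P i) f i).
Proof. by move=> tf; apply: big_ind => //; [apply: triv_cls1 | apply: triv_clsM]. Qed.

Lemma triv_cls_expdvd (x : K) k : x != 0 -> (p %| k)%N -> triv_cls p (x ^+ k).
Proof. by move=> nx /dvdnP[q ->]; rewrite exprM; apply/triv_cls_expp/expf_neq0. Qed.

Lemma triv_cls_coprime (x : K) k : prime p -> x != 0 -> ~~ (p %| k)%N ->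
  triv_cls p (x ^+ k) -> triv_cls p x.
Proof.
move=> p_pr nx ndvd tk; have p_gt0 := prime_gt0 p_pr.
have [u v def_kup _] := egcdnP k p_gt0.
move: def_kup; rewrite (eqP (_ : coprime p k)) ?prime_coprime // => def_kup.
have -> : x = (x ^+ u) ^+ p / (x ^+ k) ^+ v.
  by rewrite -!exprM def_kup exprD expr1 (mulnC k) mulrAC mulfV ?mul1r ?expf_neq0.
by apply: triv_clsM; [apply/triv_cls_expp/expf_neq0 | apply/triv_clsV/triv_clsX].
Qed.

Lemma same_clsP (x y : K) : same_cls p x y <-> exists2 t, triv_cls p t & x = y * t.
Proof.
split=> [[z nz ->]|[t /triv_clsP[z nz -> ->]]]; last by exists z.
by exists (z ^+ p); first exact: triv_cls_expp.
Qed.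

Lemma same_cls_sym (x y : K) : same_cls p x y -> same_cls p y x.
Proof.
case=> z nz ->; exists z^-1; rewrite ?invr_eq0 //.
by rewrite exprVn mulfK ?expf_neq0.
Qed.

Lemma same_cls_trans (x y z : K) :
  same_cls p x y -> same_cls p y z -> same_cls p x z.
Proof.
case=> u nu ->; case=> w nw ->; exists (w * u); first by rewrite mulf_neq0.
by rewrite exprMn mulrA.
Qed.

Lemma triv_cls_same (x y : K) : same_cls p x y -> triv_cls p y -> triv_cls p x.
Proof. exact: same_cls_trans. Qed.

Lemma inSpan_same_cls (a b x : K) :
  same_cls p a b -> inSpan p a x -> inSpan p b x.
Proof.
case=> z nz ->; case=> k [w nw ->]; exists k, (z ^+ k * w).
  by rewrite mulf_neq0 ?expf_neq0.
by rewrite !exprMn -mulrA -exprM mulnC exprM.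
Qed.

End PthPowerClasses.

Definition mul_hom (K : fieldType) (f : K -> K) : Prop :=
  [/\ f 1 = 1, {morph f : x y / x * y} & forall x, (f x == 0) = (x == 0)].

Section MulHom.
Variables (K : fieldType) (f : K -> K).
Hypothesis f_hom : mul_hom f.

Lemma mul_homX x n : f (x ^+ n) = f x ^+ n.
Proof.
have [f1 fM _] := f_hom.
by elim: n => [|n IHn]; rewrite ?expr0 // !exprS fM IHn.
Qed.

Lemma mul_homV x : f x^-1 = (f x)^-1.
Proof.
have [f1 fM f_eq0] := f_hom.
have [->|nx] := eqVneq x 0.
  have /eqP f0 : f 0 == 0 by rewrite f_eq0.
  by rewrite invr0 f0 invr0.
have nfx : f x != 0 by rewrite f_eq0.
by apply: (mulfI nfx); rewrite -fM !mulfV.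
Qed.

Lemma mul_hom_prod (I : Type) (r : seq I) (P : pred I) (F : I -> K) :
  f (\prod_(i <- r | P i) F i) = \prod_(i <- r | P i) f (F i).
Proof. by have [f1 fM _] := f_hom; apply: big_morph. Qed.

Lemma mul_hom_triv_cls p x : triv_cls p x -> triv_cls p (f x).
Proof.
have [_ _ f_eq0] := f_hom.
by case/triv_clsP=> z nz ->; rewrite mul_homX; apply: triv_cls_expp; rewrite f_eq0.
Qed.

Lemma mul_hom_same_cls p x y : same_cls p x y -> same_cls p (f x) (f y).
Proof.
have [_ fM f_eq0] := f_hom.
by case=> z nz ->; exists (f z); rewrite ?f_eq0 // fM mul_homX.
Qed.

Lemma mul_hom_iter n : mul_hom (iter n f).
Proof.
have [f1 fM f_eq0] := f_hom.
elim: n => [|n [IH1 IHM IH_eq0]]; first by split.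
split=> [|x y|x]; rewrite iterS.
- by rewrite IH1 f1.
- by rewrite IHM fM.
- by rewrite f_eq0 IH_eq0.
Qed.

Lemma mul_hom_sm1 : mul_hom (sm1 f).
Proof.
have [f1 fM f_eq0] := f_hom.
split=> [|x y|x]; rewrite /sm1.
- by rewrite f1 divr1.
- by rewrite fM invfM mulrACA.
- by rewrite mulf_eq0 invr_eq0 f_eq0 orbb.
Qed.

End MulHom.

Lemma mul_hom_gam (K : fieldType) (s : K -> K) n : mul_hom s -> mul_hom (gam s n).
Proof. by move=> s_hom; apply: mul_hom_iter (mul_hom_sm1 s_hom) n. Qed.

Lemma gamD (K : fieldType) (s : K -> K) d j x : gam s d (gam s j x) = gam s (d + j) x.
Proof. by rewrite /gam iterD. Qed.

Section FixedSubmodule.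
Variables (K : fieldType) (p : nat) (s : K -> K) (g : K) (l : nat).
Hypotheses (p_prime : prime p) (s_hom : mul_hom s) (g_neq0 : g != 0) (l_gt0 : (0 < l)%N).
Hypotheses (g_in : inJ p s l g) (g_notin : ~ inJ p s l.-1 g).

Local Notation g_ j := (gam s j g).

Lemma gam_neq0 j : g_ j != 0.
Proof. by have [_ _ ->] := mul_hom_gam j s_hom. Qed.

Lemma gam_triv j : (l <= j)%N -> triv_cls p (g_ j).
Proof.
move=> le_lj; rewrite -(subnK le_lj) -gamD.
exact: mul_hom_triv_cls (mul_hom_gam _ s_hom) _ _ g_in.
Qed.

Lemma span_sub_fixedM x : inSpan p (g_ l.-1) x -> inM p s g x /\ fixedJ p s x.
Proof.
case=> k x_def; split.
  exists l.-1.+1, (fun j => if j == l.-1 then k else 0%N).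
  rewrite big_ord_recr /= eqxx big1 ?mul1r // => j _.
  by rewrite ltn_eqF ?expr0.
apply: triv_cls_same (mul_hom_same_cls (mul_hom_sm1 s_hom) x_def) _.
rewrite (mul_homX (mul_hom_sm1 s_hom)) /gam -iterS prednK //.
exact: triv_clsX.
Qed.

Section Coefficients.
Variables (n : nat) (c : nat -> nat) (x : K).
Hypotheses (x_def : same_cls p x (\prod_(j < n) g_ j ^+ c j)) (x_fixed : fixedJ p s x).

Let gam_word d := \prod_(j < n) g_ (d + j) ^+ c j.

Lemma gam_word_triv d : (0 < d)%N -> triv_cls p (gam_word d).
Proof.
move=> d_gt0; have d_hom := mul_hom_gam d s_hom.
have Qd : same_cls p (gam s d x) (gam_word d).
  have <- : gam s d (\prod_(j < n) g_ j ^+ c j) = gam_word d.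
    by rewrite (mul_hom_prod d_hom); apply: eq_bigr => j _; rewrite (mul_homX d_hom) gamD.
  exact: mul_hom_same_cls.
apply: triv_cls_same (same_cls_sym Qd) _.
rewrite -(prednK d_gt0) /gam iterSr.
exact: mul_hom_triv_cls (mul_hom_gam _ s_hom) _ _ x_fixed.
Qed.

Lemma gam_word_lead d m (lt_mn : (m < n)%N) : (d + m)%N = l.-1 ->
  (forall j, (j < m)%N -> (p %| c j)%N) -> same_cls p (gam_word d) (g_ l.-1 ^+ c m).
Proof.
move=> def_l low_dvd; apply/same_clsP.
exists (\prod_(j < n | j != Ordinal lt_mn) g_ (d + j) ^+ c j); last first.
  by rewrite /gam_word (bigD1 (Ordinal lt_mn)) //= def_l.
apply: triv_cls_prod => j /= ne_jm.
have [lt_jm|le_mj] := ltnP j m; first by apply: triv_cls_expdvd; rewrite ?gam_neq0 ?low_dvd.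
apply/triv_clsX/gam_triv; rewrite -(prednK l_gt0) -def_l ltn_add2l ltn_neqAle le_mj.
by rewrite andbT eq_sym; apply: contra ne_jm => /eqP jm; apply/eqP/val_inj.
Qed.

Lemma coef_dvd m : (m < l.-1)%N -> (m < n)%N -> (p %| c m)%N.
Proof.
elim/ltn_ind: m => m IHm lt_ml lt_mn; apply/negPn/negP => ndvd; apply: g_notin; rewrite /inJ.
apply: (triv_cls_coprime p_prime (gam_neq0 _) ndvd).
apply: triv_cls_same (same_cls_sym (gam_word_lead lt_mn (subnK (ltnW lt_ml)) _)) _.
  by move=> j lt_jm; apply: IHm; [| exact: ltn_trans lt_ml | exact: ltn_trans lt_mn].
by apply: gam_word_triv; rewrite subn_gt0.
Qed.

Lemma fixedM_sub_span : inSpan p (g_ l.-1) x.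
Proof.
have [lt_ln|le_nl] := ltnP l.-1 n.
  exists (c l.-1); apply: same_cls_trans x_def (gam_word_lead lt_ln (add0n _) _).
  by move=> j lt_jl; apply: coef_dvd; [| exact: ltn_trans lt_ln].
exists 0%N; rewrite expr0; apply: triv_cls_same x_def _.
apply: triv_cls_prod => j _; apply: triv_cls_expdvd; first exact: gam_neq0.
by apply: coef_dvd; [exact: leq_trans le_nl | ].
Qed.

End Coefficients.

Lemma fixedM_span x : inSpan p (g_ l.-1) x <-> inM p s g x /\ fixedJ p s x.
Proof.
split; first exact: span_sub_fixedM.
by case=> -[n [c x_def]] x_fixed; apply: fixedM_sub_span x_def x_fixed.
Qed.

Lemma span_norm_eq_fixedM_same_cls (alpha : K) :
  same_cls p (g_ l.-1) (normJ p s alpha) -> span_norm_eq_fixedM p s alpha g.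
Proof.
move=> top_norm x _; rewrite -fixedM_span.
split; apply: inSpan_same_cls => //; exact: same_cls_sym.
Qed.

End FixedSubmodule.

Section Kummer.
Variables (K : fieldType) (p : nat) (s : K -> K) (xi rt : K).
Hypotheses (p_prime : prime p) (p_odd : odd p) (xi_prim : p.-primitive_root xi).
Hypotheses (s_add : {morph s : x y / x + y}) (s_hom : mul_hom s).
Hypotheses (s_xi : s xi = xi) (s_rt : s rt = xi * rt) (rt_neq0 : rt != 0).
Hypothesis s_order : forall x, iter p s x = x.

Let p_gt0 := prime_gt0 p_prime.
Let s1 : s 1 = 1. Proof. by case: s_hom. Qed.
Let sM : {morph s : x y / x * y}. Proof. by case: s_hom. Qed.
Let s_eq0 x : (s x == 0) = (x == 0). Proof. by case: s_hom. Qed.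
Let iter_hom n := mul_hom_iter s_hom n.

Lemma s_sum (I : Type) (r : seq I) (P : pred I) (F : I -> K) :
  s (\sum_(i <- r | P i) F i) = \sum_(i <- r | P i) s (F i).
Proof. by apply: big_morph => //; apply/eqP; rewrite s_eq0. Qed.

Lemma iter_s_rt n : iter n s rt = xi ^+ n * rt.
Proof.
elim: n => [|n IHn]; first by rewrite mul1r.
by rewrite iterS IHn sM (mul_homX s_hom) s_xi s_rt exprS mulrCA mulrA.
Qed.

Lemma s_fixed_root1 y : y ^+ p = 1 -> s y = y.
Proof. by case/(prim_rootP xi_prim) => i ->; rewrite (mul_homX s_hom) s_xi. Qed.

Lemma s_sm1 y : y != 0 -> s y = y * sm1 s y.
Proof. by move=> ny; rewrite /sm1 mulrC divfK. Qed.

Lemma normJ_sm1 y : y != 0 -> normJ p s (sm1 s y) = 1.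
Proof.
move=> ny; rewrite /normJ -(big_mkord xpredT (fun k => iter k s (sm1 s y))).
rewrite (@telescope_prodf_eq _ 0 p (fun k => iter k s y)) //= ?s_order ?divff //.
- by move=> k _; have [_ _ ->] := iter_hom k.
- move=> k _; have [_ iterM _] := iter_hom k.
  by rewrite /sm1 iterM (mul_homV (iter_hom k)) -iterSr.
Qed.

Definition pnorm (c : K) k := \prod_(m < k) iter m s c.

Lemma pnormS c k : pnorm c k.+1 = c * s (pnorm c k).
Proof. by rewrite /pnorm big_ord_recl (mul_hom_prod s_hom). Qed.

Definition resolvent (z th : K) := \sum_(i < p) pnorm z i * iter i s th.

Lemma resolvent_fixed z th :
  normJ p s z = 1 -> z * s (resolvent z th) = resolvent z th.
Proof.
move=> norm_z; pose G i := pnorm z i * iter i s th.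
have G_p : G p = G 0%N by rewrite /G [pnorm z p]norm_z s_order /pnorm big_ord0.
rewrite /resolvent s_sum mulr_sumr (eq_bigr (fun i : 'I_p => G i.+1)); last first.
  by move=> i _; rewrite /G pnormS sM mulrA.
have recl : \sum_(i < p.+1) G i = G 0%N + \sum_(i < p) G i.+1 by rewrite big_ord_recl.
by apply: (addrI (G 0%N)); rewrite -recl big_ord_recr /= G_p addrC.
Qed.

(* sum_m resolvent z (rt^m) rt^-m = p, because sigma^i rt = xi^i rt. *)
Lemma resolvent_rt_neq0 z : exists m, resolvent z (rt ^+ m) != 0.
Proof.
have [/existsP[m res_m] | /existsPn res0] :=
  boolP [exists m : 'I_p, resolvent z (rt ^+ m) != 0]; first by exists m.
case/negP: (prim_root_natf_neq0 xi_prim); apply/eqP.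
have <- : \sum_(m < p) resolvent z (rt ^+ m) * rt ^- m = 0.
  by apply: big1 => m _; rewrite (eqP (negPn (res0 m))) mul0r.
rewrite (eq_bigr (fun m : 'I_p => \sum_(i < p) pnorm z i * (xi ^+ i) ^+ m)); last first.
  move=> m _; rewrite mulr_suml; apply: eq_bigr => i _.
  by rewrite (mul_homX (iter_hom i)) iter_s_rt exprMn exprAC -mulrA mulfK ?expf_neq0.
rewrite exchange_big /=.
rewrite (eq_bigr (fun i : 'I_p => pnorm z i * if val i == 0%N then p%:R else 0)).
  rewrite (bigD1 (Ordinal p_gt0)) //= big1 ?addr0 /pnorm ?big_ord0 ?mul1r //.
  by move=> i ne_i0; rewrite ifN ?mulr0.
by move=> i _; rewrite -mulr_sumr sum_expr_prim_root.
Qed.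

Lemma hilbert90 z : z != 0 -> normJ p s z = 1 -> exists2 c, c != 0 & s c = z * c.
Proof.
move=> nz norm_z; have [m res_m] := resolvent_rt_neq0 z.
exists (resolvent z (rt ^+ m))^-1; first by rewrite invr_eq0.
by rewrite (mul_homV s_hom) -{2}(resolvent_fixed _ norm_z) invfM mulrA mulfV ?mul1r.
Qed.

Lemma normJM x y : normJ p s (x * y) = normJ p s x * normJ p s y.
Proof.
rewrite /normJ -big_split; apply: eq_bigr => k _.
by have [_ -> _] := iter_hom k.
Qed.

Lemma normJV x : normJ p s x^-1 = (normJ p s x)^-1.
Proof. by rewrite /normJ -prodfV; apply: eq_bigr => k _; rewrite (mul_homV (iter_hom k)). Qed.

Lemma normJ_neq0 x : x != 0 -> normJ p s x != 0.
Proof.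
move=> nx; rewrite /normJ prodf_seq_neq0; apply/allP => k _.
by have [_ _ ->] := iter_hom k.
Qed.

Lemma normJ_fixed g : g != 0 -> s (normJ p s g) = normJ p s g.
Proof.
move=> ng; have -> : s (normJ p s g) = normJ p s (s g).
  by rewrite (mul_hom_prod s_hom); apply: eq_bigr => k _; rewrite -iterSr.
by rewrite s_sm1 // normJM normJ_sm1 // mulr1.
Qed.

Section Twisted.
Variables (y f c : K).
Hypotheses (c_neq0 : c != 0) (s_f : s f = f) (s_y : s y = y * f * c ^+ p).

Lemma iter_twisted k : iter k s y = y * f ^+ k * pnorm c k ^+ p.
Proof.
elim: k => [|k IHk]; first by rewrite /pnorm big_ord0 expr1n !mulr1.
by rewrite iterS IHk !sM !(mul_homX s_hom) s_f s_y pnormS exprS exprMn; ring.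
Qed.

Lemma prod_pnorm_shift :
  (\prod_(k < p) s (pnorm c k)) * c ^+ p = (\prod_(k < p) pnorm c k) * normJ p s c.
Proof.
have -> : c ^+ p = \prod_(k < p) c by rewrite prodr_const card_ord.
rewrite -big_split /=.
rewrite (eq_bigr (fun k : 'I_p => pnorm c k.+1)) => [|k _]; last by rewrite pnormS mulrC.
have recl : \prod_(k < p.+1) pnorm c k = \prod_(k < p) pnorm c k.+1.
  by rewrite big_ord_recl {1}/pnorm big_ord0 mul1r.
by rewrite -recl big_ord_recr.
Qed.

(* Since p is odd, sum_(k < p) k = p (p-1)/2 is a multiple of p. *)
Lemma normJ_twisted :
  exists P, P ^+ p = normJ p s y /\ s P = P * (f * normJ p s c).
Proof.
pose P := y * f ^+ p.-1./2 * \prod_(k < p) pnorm c k; exists P; split.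
  rewrite /normJ (eq_bigr (fun k : 'I_p => y * f ^+ k * pnorm c k ^+ p)) => [|k _].
    rewrite !big_split /=.
    rewrite prodr_const card_ord prodrXr prodrXl (sum_ord_odd p_odd).
    by rewrite !exprMn -exprM mulnC exprM.
  exact: iter_twisted.
rewrite /P !sM (mul_homX s_hom) s_f (mul_hom_prod s_hom) s_y.
have -> : \prod_(k < p) s (pnorm c k) = \prod_(k < p) pnorm c k * normJ p s c / c ^+ p.
  by rewrite -prod_pnorm_shift mulfK ?expf_neq0.
by field; rewrite expf_neq0.
Qed.

Lemma twisted_norm1 : normJ p s y = 1 -> f * normJ p s c = 1.
Proof.
move=> norm_y; have [P [P_p s_P]] := normJ_twisted.
have P_root1 : P ^+ p = 1 by rewrite P_p.
have P_neq0 : P != 0.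
  by apply: contra_eq_neq P_root1 => ->; rewrite expr0n gtn_eqF // eq_sym oner_neq0.
by apply: (mulfI P_neq0); rewrite -s_P mulr1 s_fixed_root1.
Qed.

End Twisted.

Lemma sm1_J2_decomp u : u != 0 -> inJ p s 2 u ->
  exists c f, [/\ c != 0, s f = f & sm1 s u = f * c ^+ p].
Proof.
move=> nu /triv_clsP[z nz x_def]; set x := sm1 s u in x_def.
have nx : x != 0 by have [_ _ ->] := mul_hom_sm1 s_hom.
have s_x : s x = x * 1 * z ^+ p by rewrite mulr1 -x_def s_sm1.
have norm_z : normJ p s z = 1.
  by rewrite -[normJ p s z]mul1r (twisted_norm1 nz s1 s_x) ?normJ_sm1.
have [c nc s_c] := hilbert90 nz norm_z.
exists c, (x / c ^+ p); split; rewrite ?divfK ?expf_neq0 //.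
rewrite sM (mul_homV s_hom) (mul_homX s_hom) s_x s_c exprMn mulr1 invfM mulrA.
by rewrite mulfK ?expf_neq0.
Qed.

Lemma sm1_same_norm_of_norm1 u : u != 0 -> inJ p s 2 u -> normJ p s u = 1 ->
  exists2 alpha, alpha != 0 & same_cls p (sm1 s u) (normJ p s alpha).
Proof.
move=> nu u_J2 norm_u; have [c [f [nc s_f def_sm1]]] := sm1_J2_decomp nu u_J2.
have s_u : s u = u * f * c ^+ p by rewrite s_sm1 // def_sm1 mulrA.
have f_norm := twisted_norm1 nc s_f s_u norm_u.
exists c^-1; first by rewrite invr_eq0.
exists c => //; rewrite def_sm1 normJV; congr (_ * _).
by apply: (mulIf (normJ_neq0 nc)); rewrite f_norm mulVf ?normJ_neq0.
Qed.

Lemma twisted_sm1_same_norm g : g != 0 -> inJ p s 2 g ->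
  exists n, exists2 alpha, alpha != 0 & same_cls p (xi ^+ n * sm1 s g) (normJ p s alpha).
Proof.
move=> ng g_J2; have [c [f [nc s_f def_sm1]]] := sm1_J2_decomp ng g_J2.
have s_g : s g = g * f * c ^+ p by rewrite s_sm1 // def_sm1 mulrA.
have [P [P_p s_P]] := normJ_twisted nc s_f s_g.
have P_neq0 : P != 0.
  by apply: contra_neq (normJ_neq0 ng) => P0; rewrite -P_p P0 expr0n gtn_eqF.
have root1 : (f * normJ p s c) ^+ p = 1.
  apply: (mulfI (expf_neq0 p P_neq0)); rewrite mulr1 -exprMn -s_P -(mul_homX s_hom).
  by rewrite P_p normJ_fixed.
have [j def_j] := prim_rootP xi_prim root1.
exists (p - j)%N, c^-1; first by rewrite invr_eq0.
exists c => //; rewrite def_sm1 normJV mulrA; congr (_ * _).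
apply: (mulIf (normJ_neq0 nc)); rewrite mulVf ?normJ_neq0 // -mulrA def_j -exprD.
by rewrite subnK ?(prim_expr_order xi_prim) // ltnW.
Qed.

Lemma fixedM_norm_of_level_ge3 g l : g != 0 -> (3 <= l)%N ->
    inJ p s l g -> ~ inJ p s l.-1 g ->
  exists2 alpha, alpha != 0 & span_norm_eq_fixedM p s alpha g.
Proof.
move=> ng /subnK <-; rewrite addn3; set m := (l - 3)%N => g_in g_notin.
pose v := gam s m g.
have nv : v != 0 by have [_ _ ->] := mul_hom_gam m s_hom.
have nu : sm1 s v != 0 by have [_ _ ->] := mul_hom_sm1 s_hom.
have u_J2 : inJ p s 2 (sm1 s v) by rewrite /inJ -[gam s 2 _]/(gam s 3 v) gamD.
have [alpha nalpha top] := sm1_same_norm_of_norm1 nu u_J2 (normJ_sm1 nv).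
rewrite -[sm1 s (sm1 s v)]/(gam s 2 v) gamD in top.
exists alpha => //.
exact: span_norm_eq_fixedM_same_cls p_prime s_hom ng _ g_in g_notin _ top.
Qed.

Lemma sm1_rt_twist n g : sm1 s (rt ^+ n * g) = xi ^+ n * sm1 s g.
Proof.
have [_ sm1M _] := mul_hom_sm1 s_hom.
by rewrite sm1M (mul_homX (mul_hom_sm1 s_hom)) /sm1 s_rt mulfK.
Qed.

Lemma fixedM_norm_of_level2 g : g != 0 -> inJ p s 2 g ->
    ~ (exists (r : int) (g1 : K), [/\ g1 != 0, g = rt ^ r * g1 & inJ p s 1 g1]) ->
  exists (t : int) (alpha : K), alpha != 0 /\ span_norm_eq_fixedM p s alpha (rt ^ t * g).
Proof.
move=> ng g_J2 not_split; have [n [alpha nalpha top]] := twisted_sm1_same_norm ng g_J2.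
have ng' : rt ^+ n * g != 0 by rewrite mulf_neq0 ?expf_neq0.
have xin_fixed : sm1 s (xi ^+ n) = 1.
  rewrite /sm1 (mul_homX s_hom) s_xi divff // expf_neq0 //.
  by rewrite (prim_root_eq0 xi_prim) gtn_eqF.
have g'_J2 : inJ p s 2 (rt ^+ n * g).
  have [_ sm1M _] := mul_hom_sm1 s_hom.
  by rewrite /inJ -[gam s 2 _]/(sm1 s (sm1 s _)) sm1_rt_twist sm1M xin_fixed mul1r.
have g'_notJ1 : ~ inJ p s 2.-1 (rt ^+ n * g).
  move=> g'_J1; apply: not_split; exists (- n%:Z), (rt ^+ n * g); split => //.
  by rewrite -invr_expz mulKf ?expf_neq0.
rewrite -sm1_rt_twist in top.
exists n, alpha; split => //.
exact: span_norm_eq_fixedM_same_cls p_prime s_hom ng' _ g'_J2 g'_notJ1 _ top.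
Qed.

End Kummer.

Section KummerExtension.
Variables (F : fieldType) (K : fieldExtType F) (sigma : 'End(K)).
Hypothesis sigma_hom : kHom 1 fullv sigma.

Lemma kHom_mul_hom : mul_hom (fun x => sigma x).
Proof.
have [s_fix sM] := kHomP_tmp sigma_hom.
have s1 : sigma 1 = 1 by rewrite s_fix ?mem1v.
split=> [|x y|x] //; first by rewrite sM ?memvf.
have [->|nx] := eqVneq x 0; first by rewrite linear0 eqxx.
apply/negbTE/eqP => sx0; move/eqP: (oner_neq0 K); apply.
by rewrite -s1 -(mulfV nx) sM ?memvf // sx0 mul0r.
Qed.

Lemma kHom_iter_order (xi : F) (rt : K) p :
    <<1; rt>>%VS = fullv -> sigma rt = xi *: rt -> xi ^+ p = 1 ->
  forall x, iter p (fun x => sigma x) x = x.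
Proof.
move=> gen s_rt xi_p x; have [s_fix _] := kHomP_tmp sigma_hom.
have iter_hom := mul_hom_iter kHom_mul_hom p; have [_ iterM _] := iter_hom.
have iter_fix n y : y \in 1%VS -> iter n (fun x => sigma x) y = y.
  by move=> y1; elim: n => //= n ->; apply: s_fix.
have iter_rt n : iter n (fun x => sigma x) rt = xi ^+ n *: rt.
  by elim: n => [|n /= -> /=]; rewrite ?scale1r // linearZZ /= s_rt scalerA exprSr.
have iter_sum n (I : Type) (r : seq I) (P : pred I) (G : I -> K) :
    iter n (fun x => sigma x) (\sum_(i <- r | P i) G i) =
    \sum_(i <- r | P i) iter n (fun x => sigma x) (G i).
  by elim: n => //= n ->; apply: linear_sum.
have : x \in <<1; rt>>%VS by rewrite gen memvf.
case/Fadjoin_polyP => q /polyOverP q1 ->; rewrite horner_coef iter_sum.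
apply: eq_bigr => i _.
by rewrite iterM (mul_homX iter_hom) iter_fix // iter_rt xi_p scale1r.
Qed.

End KummerExtension.

Theorem lemma1 (F : fieldType) (K : fieldExtType F) (p : nat)
  (xi : F) (a : F) (rt : K) (sigma : 'End(K)) (gamma : K) (l : nat) :
  prime p -> (2 < p)%N ->
  (p%:R : F) != 0 ->
  p.-primitive_root xi ->
  a != 0 -> ~ (exists b : F, a = b ^+ p) ->
  rt ^+ p = a%:A ->
  <<1; rt>>%VS = fullv ->
  kHom 1%VS fullv sigma ->
  sigma rt = xi *: rt ->
  gamma != 0 ->
  ~ triv_cls p gamma ->
  inJ p (fun x => sigma x) l gamma -> ~ inJ p (fun x => sigma x) l.-1 gamma ->
  ((3 <= l <= p)%N ->
     exists2 alpha : K, alpha != 0 &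
       span_norm_eq_fixedM p (fun x => sigma x) alpha gamma)
  /\
  (l = 2%N ->
   ~ (exists (r : int) (g1 : K), [/\ g1 != 0, gamma = rt ^ r * g1
                                     & inJ p (fun x => sigma x) 1 g1]) ->
   exists (t : int) (alpha : K), alpha != 0 /\
     span_norm_eq_fixedM p (fun x => sigma x) alpha (rt ^ t * gamma)).
Proof.
move=> p_prime p_gt2 _ xi_prim a_neq0 _ rt_p gen sigma_hom sigma_rt g_neq0 _.
set s := fun x => sigma x => g_in g_notin.
have s_hom : mul_hom s := kHom_mul_hom sigma_hom.
have s_add : {morph s : x y / x + y} by move=> x y; rewrite /s linearD.
have [s_fix _] := kHomP_tmp sigma_hom.
have s_xi : s xi%:A = xi%:A by rewrite /s s_fix ?rpredZ ?mem1v.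
have s_rt : s rt = xi%:A * rt by rewrite /s sigma_rt mulr_algl.
have xiK_prim : p.-primitive_root (xi%:A : K).
  by rewrite -[xi%:A]/(GRing.in_alg K xi) fmorph_primitive_root.
have rt_neq0 : rt != 0.
  apply: contra_eq_neq rt_p => ->; rewrite expr0n gtn_eqF ?prime_gt0 //=.
  by rewrite eq_sym scaler_eq0 oner_eq0 orbF.
have p_odd : odd p by case: (even_prime p_prime) => // p2; rewrite p2 in p_gt2.
have s_order := kHom_iter_order sigma_hom gen sigma_rt (prim_expr_order xi_prim).
split=> [/andP[le3l _] | l2].
  have [alpha nalpha span] := fixedM_norm_of_level_ge3 p_prime p_odd xiK_prim s_add s_hom
    s_xi s_rt rt_neq0 s_order g_neq0 le3l g_in g_notin.
  by exists alpha.
rewrite l2 in g_in => not_split.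
have [t [alpha [nalpha span]]] := fixedM_norm_of_level2 p_prime p_odd xiK_prim s_add s_hom
  s_xi s_rt rt_neq0 s_order g_neq0 g_in not_split.
by exists t, alpha.
Qed.
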